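(* Let $s\geq 2$ be an even integer, let $m\geq 3$ be an integer, and let $n$ be an integer with $n\geq (2sm-1)\left(\frac{sm}{2}-1\right)+1$. Then $$R(P_n,J_{s,m})=n+\frac{sm}{2}-1.$$
   Context: All graphs are finite and simple. For graphs $G$ and $H$, the Ramsey number $R(G,H)$ is the least natural number $N$ such that for every graph $F$ on $N$ vertices, either $F$ contains $G$ as a subgraph or the complement $\overline{F}$ contains $H$ as a subgraph. $P_n$ denotes the path on $n$ vertices. For integers $s,m\geq 2$, the generalized Jahangir graph $J_{s,m}$ is the graph on $sm+1$ vertices consisting of a cycle $C_{sm}=v_1v_2\cdots v_{sm}v_1$ together with one additional vertex adjacent to exactly the $m$ cycle vertices $v_1, v_{s+1}, v_{2s+1},\ldots,v_{(m-1)s+1}$ (i.e., $m$ vertices of the cycle at distance $s$ from each other along the cycle). *)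

From mathcomp Require Import all_boot.
Set Implicit Arguments. Unset Strict Implicit. Unset Printing Implicit Defensive.

Definition simple_graph (T : finType) (e : rel T) : Prop :=
  symmetric e /\ irreflexive e.

Definition compl_graph (T : finType) (e : rel T) : rel T :=
  fun x y => (x != y) && ~~ e x y.

Definition contains_subgraph (T U : finType) (G : rel T) (F : rel U) : Prop :=
  exists f : T -> U, injective f /\ forall x y, G x y -> F (f x) (f y).

Definition ramsey_arrow (T1 T2 : finType) (G : rel T1) (H : rel T2) (N : nat)
  : Prop :=
  forall F : rel 'I_N, simple_graph F ->
    contains_subgraph G F \/ contains_subgraph H (compl_graph F).

Definition is_ramsey_number (T1 T2 : finType) (G : rel T1) (H : rel T2)
  (N : nat) : Prop :=
  ramsey_arrow G H N /\ forall M, M < N -> ~ ramsey_arrow G H M.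

Definition path_graph (n : nat) : rel 'I_n :=
  fun i j => (i.+1 == j :> nat) || (j.+1 == i :> nat).

(* Vertices 0,...,s*m-1 form the cycle C_{sm} (vertex i is v_{i+1} of the
   paper), i ~ (i+1) mod sm; vertex s*m is the extra vertex, adjacent to the
   cycle vertices i with i = 0 mod s, i.e. v_1, v_{s+1}, ..., v_{(m-1)s+1}. *)
Definition jahangir_graph (s m : nat) : rel 'I_(s * m).+1 :=
  fun i j =>
    let N := s * m in
    [|| (i < N) && (j < N) && ((j == i.+1 %% N :> nat) || (i == j.+1 %% N :> nat)),
        (i == N :> nat) && (j < N) && (s %| j)
      | (j == N :> nat) && (i < N) && (s %| i)].

Arguments path_graph n : clear implicits.
Arguments jahangir_graph s m : clear implicits.

From mathcomp Require Import all_boot zify.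
From Stdlib Require Import Classical.
Set Implicit Arguments. Unset Strict Implicit. Unset Printing Implicit Defensive.

(* Let k = sm/2. Colouring the cycle vertices of J_{s,m} by parity (s is even) and the
   centre like the odd ones shows that J_{s,m} is bipartite with classes of sizes k and k+1;
   it also contains the path P_{2k} along its cycle.

   Lower bound: on fewer than n+k-1 vertices, the disjoint union of K_{n-1} and a clique of
   fewer than k vertices has no P_n, and its complement, a complete bipartite graph, has no
   P_{2k}, whose vertices alternate sides.

   Upper bound: let F have n+k-1 vertices. If two disjoint sets of sizes k and k+1 span no
   edge of F, the complement contains K_{k,k+1} and hence J_{s,m}. Otherwise independent
   sets have at most 2k vertices, and a depth-first search finds a path missing at most 2k
   vertices. If a path cannot be extended and x lies off it, then x together with the
   successors of its neighbours on the path is independent (else a Posa rotation yields a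
   longer path), so x has fewer than 2k neighbours on it. Hence, once the path has more than
   2k^2 vertices and k vertices lie outside it, some k+1 path vertices see none of those k,
   which is impossible; so paths keep growing until they have n vertices. *)

Lemma split_nth_segment (T : Type) (x0 : T) (p : seq T) a c : a < c < size p ->
  exists s, p = take a p ++ nth x0 p a :: nth x0 p a.+1 :: s ++ drop c.+1 p
            /\ last (nth x0 p a.+1) s = nth x0 p c.
Proof.
move=> /andP[ac cp]; exists (take (c - a.+1) (drop a.+2 p)); split.
  rewrite -[drop c.+1 p](_ : drop (c - a.+1) (drop a.+2 p) = _); last first.
    by rewrite drop_drop; congr drop; lia.
  by rewrite cat_take_drop -!drop_nth ?cat_take_drop //; lia.
rewrite -[LHS]/(last x0 (nth x0 p a.+1 :: _)) -nth_last /= size_takel ?size_drop; last lia.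
case E: (c - a.+1) => [|i] /=; first by congr nth; lia.
by rewrite nth_take ?nth_drop //; congr nth; lia.
Qed.

Lemma path_nth_drop (T : Type) (e : rel T) x0 (p : seq T) i :
  sorted e p -> i < size p -> path e (nth x0 p i) (drop i.+1 p).
Proof. by move=> sp ip; have := drop_sorted i sp; rewrite (drop_nth x0 ip). Qed.

Section SimplePaths.
Variables (T : eqType) (F : rel T).
Hypothesis Fsym : symmetric F.

Definition simple_path (p : seq T) : bool := uniq p && sorted F p.

Definition has_path_of_size (n : nat) : Prop := exists2 p, simple_path p & size p = n.

Lemma simple_path_take n p : simple_path p -> simple_path (take n p).
Proof. by case/andP=> up sp; rewrite /simple_path take_uniq ?take_sorted. Qed.

Lemma path_rev_cons x v s : path F x (rev (v :: s)) = F x (last v s) && path F v s.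
Proof.
rewrite lastI rev_rcons /= rev_path; congr (_ && _).
by apply: eq_path => ??; rewrite Fsym.
Qed.

Lemma perm_rotate (r s t : seq T) (u v x : T) :
  perm_eq (r ++ u :: x :: rev (v :: s) ++ t) (x :: r ++ u :: v :: s ++ t).
Proof.
rewrite perm_sym -cat1s perm_catCA perm_cat2l /= -(cat1s u) -(cat1s x) perm_catCA /=.
by rewrite !perm_cons -cat_cons perm_cat2r perm_sym perm_rev.
Qed.

Lemma simple_path_rotate (r s t : seq T) (u v x : T) :
  simple_path (r ++ u :: v :: s ++ t) -> x \notin r ++ u :: v :: s ++ t ->
  F u x -> F x (last v s) -> path F v t ->
  simple_path (r ++ u :: x :: rev (v :: s) ++ t).
Proof.
case/andP=> up sp xp Fux Fxs Fvt.
rewrite /simple_path (perm_uniq (perm_rotate _ _ _ _ _ _)) /= xp up.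
move: sp; rewrite !sorted_cat_cons /= cat_path => /and3P[-> _ /andP[Fvs _]].
by rewrite Fux cat_path path_rev_cons Fxs Fvs rev_cons last_rcons.
Qed.

Lemma extend_at_end p x :
  simple_path p -> x \notin p -> F x (last x p) -> has_path_of_size (size p).+1.
Proof.
case/andP=> up sp xp Fx; exists (rcons p x); last by rewrite size_rcons.
rewrite /simple_path rcons_uniq xp up /=.
by case: p sp Fx {up xp} => //= y p sp Fx; rewrite rcons_path sp Fsym.
Qed.

Lemma extend_by_rotation x0 p x a c :
  simple_path p -> x \notin p -> a < c < size p ->
  F x (nth x0 p a) -> F x (nth x0 p c) -> path F (nth x0 p a.+1) (drop c.+1 p) ->
  has_path_of_size (size p).+1.
Proof.
move=> pp xp acp Fxa Fxc Fvt; have [s [ep es]] := split_nth_segment x0 acp.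
rewrite ep in pp xp *.
exists (take a p ++ nth x0 p a :: x :: rev (nth x0 p a.+1 :: s) ++ drop c.+1 p).
  by apply: simple_path_rotate; rewrite // ?es // Fsym.
by rewrite !size_cat /= !size_cat size_rev /=; lia.
Qed.

Section MaximalPath.
Variables (x0 x : T) (p : seq T).
Hypotheses (pp : simple_path p) (maxp : ~ has_path_of_size (size p).+1) (xp : x \notin p).

Lemma maximal_path_last : ~~ F x (last x p).
Proof. by apply/negP => Fx; apply: maxp; exact: extend_at_end pp xp Fx. Qed.

Lemma maximal_path_rotation a c : a < c < size p ->
  F x (nth x0 p a) -> F x (nth x0 p c) -> ~~ path F (nth x0 p a.+1) (drop c.+1 p).
Proof.
by move=> acp Fa Fc; apply/negP => Fv; apply: maxp; exact: extend_by_rotation acp Fa Fc Fv.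
Qed.

Lemma maximal_path_succ i : i.+1 < size p -> F x (nth x0 p i) -> ~~ F x (nth x0 p i.+1).
Proof.
move=> ip Fxi; apply/negP => Fx; have acp : i < i.+1 < size p by rewrite ltnSn.
by move: (maximal_path_rotation acp Fxi Fx); rewrite path_nth_drop //; case/andP: pp.
Qed.

Lemma maximal_path_succs i j : i < j -> j.+1 < size p ->
  F x (nth x0 p i) -> F x (nth x0 p j) -> ~~ F (nth x0 p i.+1) (nth x0 p j.+1).
Proof.
move=> ij jp Fxi Fxj; have acp : i < j < size p by rewrite ij ltnW.
have sp : sorted F p by case/andP: pp.
by move: (maximal_path_rotation acp Fxi Fxj); rewrite (drop_nth x0 jp) /= path_nth_drop // andbT.
Qed.

End MaximalPath.

End SimplePaths.

Lemma subset_of_card (T : finType) (A : {set T}) n :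
  n <= #|A| -> exists2 B : {set T}, B \subset A & #|B| = n.
Proof.
case/card_geqP=> s [us <- sA]; exists [set x in s]; last by rewrite cardsE; apply/card_uniqP.
by apply/subsetP=> x; rewrite inE => /sA.
Qed.

Lemma card_bigcup_le (I T : finType) (P : {pred I}) (B : I -> {set T}) :
  #|\bigcup_(i in P) B i| <= \sum_(i in P) #|B i|.
Proof.
elim/big_rec2: _ => [|i U n _ IH]; first by rewrite cards0.
by rewrite (leq_trans (leq_card_setU _ _)) ?leq_add2l.
Qed.

Lemma card_le_of_inj (T U : finType) (g : T -> U) (A : {set U}) :
  injective g -> (forall t, g t \in A) -> #|T| <= #|A|.
Proof.
move=> ginj gA; rewrite -cardsT -(card_imset _ ginj).
by apply: subset_leq_card; apply/subsetP=> _ /imsetP[t _ ->].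
Qed.

Lemma card_le_of_inj_nat (T : finType) (C : {set T}) (h : T -> nat) b :
  {in C &, injective h} -> {in C, forall x, h x < b} -> #|C| <= b.
Proof.
move=> hinj hb; rewrite cardE -(size_map h) -(size_iota 0 b); apply: uniq_leq_size.
  by rewrite map_inj_in_uniq ?enum_uniq // => x y; rewrite !mem_enum; exact: hinj.
by move=> _ /mapP[x xC ->]; rewrite mem_iota hb // -mem_enum.
Qed.

Lemma nth_index_inj (T U : eqType) (u0 : U) (s : seq T) (t : seq U) :
  uniq t -> size s <= size t -> {in s &, injective (fun x => nth u0 t (index x s))}.
Proof.
move=> ut st x y xs ys /eqP; rewrite nth_uniq ?(leq_trans _ st) ?index_mem // => /eqP e.
by rewrite -(nth_index x xs) e nth_index.
Qed.

Definition anticomplete (T : finType) (F : rel T) (A B : {set T}) : Prop :=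
  {in A & B, forall x y, ~~ F x y}.

Section DepthFirstSearch.
Variables (V : finType) (F : rel V).
Hypothesis Fsym : symmetric F.

(* A depth-first search in progress: [S] holds the finished vertices, [p] is the stack,
   top first. *)
Definition dfs_state (S : {set V}) (p : seq V) : Prop :=
  [/\ simple_path F p, [disjoint S & p]
    & forall x y, x \in S -> y \notin S -> y \notin p -> ~~ F x y].

Lemma dfs_state_card S p : dfs_state S p -> #|S| + size p <= #|V|.
Proof.
case=> /andP[/card_uniqP cp _] dSp _.
by rewrite -cp -cardUI (eqP dSp) addn0 max_card.
Qed.

Lemma dfs_state_push S u p t :
  dfs_state S (u :: p) -> t \notin S -> t \notin u :: p -> F u t ->
  dfs_state S [:: t, u & p].
Proof.
case=> /andP[up sp] dSp noSE tS tp Fut; split.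
- by rewrite /simple_path cons_uniq tp up /= Fsym Fut.
- apply/pred0P=> y /=; apply/negP=> /andP[yS]; rewrite inE => /predU1P[yt|yp].
    by rewrite -yt yS in tS.
  by rewrite (disjointFr dSp yS) in yp.
- by move=> x y xS yS; rewrite inE negb_or => /andP[_]; exact: noSE.
Qed.

Lemma dfs_state_pop S u p :
  dfs_state S (u :: p) -> (forall t, t \notin S -> t \notin u :: p -> ~~ F u t) ->
  dfs_state (u |: S) p /\ #|u |: S| = #|S|.+1.
Proof.
case=> /andP[/andP[up' up] sp] dSp noSE noUE.
have uS : u \notin S by apply/negP => uS; have := disjointFr dSp uS; rewrite mem_head.
split; last by rewrite cardsU1 uS.
split.
- by apply/andP; split; last exact: path_sorted sp.
- apply/pred0P=> y /=; apply/negP=> /andP[/setU1P[-> | yS] yp]; first by rewrite yp in up'.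
  by have := disjointFr dSp yS; rewrite inE yp orbT.
- move=> x y xuS /setU1P yuS yp.
  have yS : y \notin S by apply/negP=> ?; apply: yuS; right.
  have yup : y \notin u :: p.
    by rewrite inE negb_or yp andbT; apply/eqP=> yu; apply: yuS; left.
  by case/setU1P: xuS => [-> | xS]; [exact: noUE | exact: noSE].
Qed.

Lemma dfs_state_grow S p : dfs_state S p -> #|S| < #|V| ->
  exists S' p', dfs_state S' p' /\ #|S'| = #|S|.+1.
Proof.
(* [set] identifies two elaborations of [#|V|] that [lia] would treat as distinct atoms. *)
move=> + ltS; set N := #|V| in ltS *.
have [b] := ubnP (N - (#|S| + size p)); elim: b p => // b IH p lt st.
case: p lt st => [|u p] lt st.
  have [t] : exists t, t \in ~: S by apply/card_gt0P; have := cardsC S; lia.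
  rewrite inE => tS; have st1 : dfs_state S [:: t].
    case: st => _ _ noSE; split=> //; first by rewrite disjoint_sym disjoint_has /= orbF.
    by move=> x y xS yS _; exact: noSE.
  have lt1 : N - (#|S| + size [:: t]) < b by rewrite /= in lt *; lia.
  exact: IH lt1 st1.
have [t /and3P[tS tp Fut] | noUE] := pickP [pred t | [&& t \notin S, t \notin u :: p & F u t]].
  have st' := dfs_state_push st tS tp Fut.
  have lt' : N - (#|S| + size [:: t, u & p]) < b.
    by have := dfs_state_card st'; rewrite -/N /= in lt *; lia.
  exact: IH lt' st'.
exists (u |: S), p; apply: dfs_state_pop => // t tS tp.
by apply: contraFN (noUE t) => Fut; rewrite /= tS tp.
Qed.

Lemma dfs_state_of_card i : i <= #|V| -> exists S p, dfs_state S p /\ #|S| = i.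
Proof.
elim: i => [_ | i IH ltiV].
  exists set0, [::]; split; last exact: cards0.
  split=> //; first by rewrite disjoint_sym disjoint_has.
  by move=> x y; rewrite inE.
have [S [p [st eS]]] := IH (ltnW ltiV); rewrite -eS in ltiV *.
exact: dfs_state_grow st ltiV.
Qed.

End DepthFirstSearch.

Section LargeAnticompleteFree.
Variables (V : finType) (F : rel V) (k : nat).
Hypotheses (Fsym : symmetric F) (Firr : irreflexive F).
Hypothesis no_anticomplete : forall A B : {set V},
  [disjoint A & B] -> k <= #|A| -> k < #|B| -> ~ anticomplete F A B.

Lemma independent_card_le (I : {set V}) : anticomplete F I I -> #|I| <= 2 * k.
Proof.
move=> indI; rewrite leqNgt; apply/negP => ltI.
have [B BI cB] : exists2 B : {set V}, B \subset I & #|B| = k.+1 by apply: subset_of_card; lia.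
apply: (@no_anticomplete (I :\: B) B).
- by rewrite disjoints_subset subsetDr.
- by rewrite cardsDS // cB; lia.
- by rewrite cB.
- by move=> x y /setDP[xI _] /(subsetP BI) yI; exact: indI.
Qed.

Lemma long_dfs_path : k <= #|V| -> exists2 p : seq V, simple_path F p & #|V| <= size p + 2 * k.
Proof.
move=> kV; have [S [p [[pp dSp noSE] cS]]] := dfs_state_of_card Fsym kV.
exists p => //; set R := ~: (S :|: [set y in p]).
have cR : #|R| <= k.
  rewrite leqNgt; apply/negP => ltR; apply: (@no_anticomplete S R); rewrite ?cS //.
    by rewrite disjoints_subset setCK subsetUl.
  by move=> x y xS; rewrite !inE negb_or => /andP[yS yp]; exact: noSE.
have cSp : #|S :|: [set y in p]| <= k + size p.
  rewrite (leq_trans (leq_card_setU _ _)) // cardsE cS leq_add2l.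
  by case/andP: pp => /card_uniqP ->.
move: (cardsC (S :|: [set y in p])); rewrite -/R => <-.
by apply: leq_trans (leq_add cSp cR) _; rewrite addnAC addnC addnn mul2n.
Qed.

Lemma card_neighbors_on_maximal_path x0 p x :
  simple_path F p -> ~ has_path_of_size F (size p).+1 -> x \notin p ->
  #|[set i : 'I_(size p) | F x (nth x0 p i)]| < 2 * k.
Proof.
move=> pp maxp xp; set D := [set i : 'I_(size p) | F x (nth x0 p i)].
have DP (i : 'I_(size p)) : (i \in D) = F x (nth x0 p i) by rewrite inE.
have succ_lt (i : 'I_(size p)) : i \in D -> i.+1 < size p.
  rewrite DP ltn_neqAle ltn_ord andbT => Fxi.
  apply: contraNneq (maximal_path_last Fsym pp maxp xp) => ei.
  by rewrite -(nth_last x) -ei /= (set_nth_default x0) ?ltn_ord.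
have x_succ (i : 'I_(size p)) : i \in D -> ~~ F x (nth x0 p i.+1).
  by move=> iD; apply: (maximal_path_succ Fsym pp maxp xp (succ_lt i iD)); rewrite -DP.
have succ_succ (i j : 'I_(size p)) : i \in D -> j \in D -> i < j ->
    ~~ F (nth x0 p i.+1) (nth x0 p j.+1).
  by move=> iD jD ij; apply: (maximal_path_succs Fsym pp maxp xp ij (succ_lt j jD)); rewrite -DP.
set succD := [set nth x0 p i.+1 | i : 'I_(size p) in D].
set I := x |: succD.
have cI : #|I| = #|D|.+1.
  rewrite cardsU1 card_in_imset; last first.
    move=> i j iD jD /eqP; rewrite nth_uniq ?succ_lt //; last by case/andP: pp.
    by move=> /eqP [] /ord_inj.
  suff -> : x \notin succD by [].
  by apply/imsetP=> [[i iD ex]]; rewrite ex mem_nth ?succ_lt in xp.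
rewrite -ltnS -cI; apply: independent_card_le.
move=> y z /setU1P[-> | /imsetP[i iD ->]] /setU1P[-> | /imsetP[j jD ->]].
- by rewrite Firr.
- exact: x_succ.
- by rewrite Fsym x_succ.
case: (ltngtP i j) => [ij | ji | /ord_inj ->]; first exact: succ_succ.
  by rewrite Fsym succ_succ.
by rewrite Firr.
Qed.

Lemma extend_long_path p : simple_path F p -> 2 * k * k < size p -> size p + k <= #|V| ->
  has_path_of_size F (size p).+1.
Proof.
move=> pp long room; apply: NNPP => maxp.
have [x0 _] : exists x0, x0 \in p.
  by case: p long {pp maxp room} => // x0 p _; exists x0; exact: mem_head.
have [A AR cA] : exists2 A : {set V}, A \subset ~: [set y in p] & #|A| = k.
  have cP : #|[set y in p]| = size p by rewrite cardsE; apply/card_uniqP; case/andP: pp.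
  by apply: subset_of_card; rewrite -(leq_add2l (size p)) -{2}cP cardsC.
set N := \bigcup_(x in A) [set i : 'I_(size p) | F x (nth x0 p i)].
have cN : #|N| <= k * (2 * k).-1.
  rewrite (leq_trans (card_bigcup_le _ _)) // -cA -sum_nat_const leq_sum // => x xA.
  have xp : x \notin p by have := subsetP AR x xA; rewrite !inE.
  by have := card_neighbors_on_maximal_path x0 pp maxp xp; lia.
apply: (@no_anticomplete A [set nth x0 p i | i : 'I_(size p) in ~: N]); rewrite ?cA //.
- rewrite disjoints_subset (subset_trans AR) // setCS.
  by apply/subsetP=> _ /imsetP[i _ ->]; rewrite inE mem_nth.
- rewrite card_in_imset; last first.
    move=> i j _ _ /eqP; rewrite nth_uniq //; last by case/andP: pp.
    by move=> /eqP /ord_inj.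
  by have := cardsC N; rewrite card_ord; nia.
- move=> x _ xA /imsetP[i iN ->]; rewrite inE in iN; apply: contra iN => Fxi.
  by apply/bigcupP; exists x; rewrite ?inE.
Qed.

Lemma has_long_path n : 2 * k * k + 2 * k < #|V| -> n + k <= #|V|.+1 -> has_path_of_size F n.
Proof.
move=> big; have [p0 pp0 long0] : exists2 p0 : seq V, simple_path F p0 & #|V| <= size p0 + 2 * k.
  by apply: long_dfs_path; lia.
elim: n => [|n IH] room; first by exists [::].
have [le | lt] := leqP n.+1 (size p0).
  by exists (take n.+1 p0); [exact: simple_path_take | rewrite size_takel].
have [p pp ep] := IH (ltnW room); subst n.
by apply: extend_long_path => //; lia.
Qed.

End LargeAnticompleteFree.

Lemma contains_subgraph_trans (T U W : finType) (G : rel T) (H : rel U) (F : rel W) :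
  contains_subgraph G H -> contains_subgraph H F -> contains_subgraph G F.
Proof.
move=> [f [finj fGH]] [g [ginj gHF]]; exists (g \o f); split; first exact: inj_comp.
by move=> x y /fGH /gHF.
Qed.

Lemma contains_path_graph (U : finType) (F : rel U) (x0 : U) (p : seq U) :
  symmetric F -> simple_path F p -> contains_subgraph (path_graph (size p)) F.
Proof.
move=> Fsym /andP[up /(sortedP x0) adj]; exists (fun i : 'I_(size p) => nth x0 p i); split.
  by move=> i j /eqP; rewrite nth_uniq // => /eqP /ord_inj.
by move=> i j /orP[] /eqP ei; [|rewrite Fsym]; rewrite -ei adj // ei.
Qed.

Lemma contains_subgraph_compl (T U : finType) (H : rel T) (F : rel U) (u0 : U)
    (c : T -> bool) (A B : {set U}) :
  symmetric F -> (forall x y, H x y -> c x != c y) ->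
  #|[set x | c x]| <= #|A| -> #|[set x | ~~ c x]| <= #|B| ->
  [disjoint A & B] -> anticomplete F A B -> contains_subgraph H (compl_graph F).
Proof.
move=> Fsym proper cA cB dAB antiAB.
set C := [set x | c x] in cA; set D := [set x | ~~ c x] in cB.
have sCA : size (enum C) <= size (enum A) by rewrite -!cardE.
have sDB : size (enum D) <= size (enum B) by rewrite -!cardE.
pose f x := if c x then nth u0 (enum A) (index x (enum C)) else nth u0 (enum B) (index x (enum D)).
have fA x : c x -> f x \in A.
  by move=> cx; rewrite /f cx -mem_enum mem_nth // (leq_trans _ sCA) // index_mem mem_enum inE.
have fB x : ~~ c x -> f x \in B.
  move=> cx; rewrite /f (negbTE cx) -mem_enum mem_nth // (leq_trans _ sDB) //.
  by rewrite index_mem mem_enum inE.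
have fAB x y : c x -> ~~ c y -> (f x != f y) && ~~ F (f x) (f y).
  move=> cx cy; rewrite antiAB ?fA ?fB // andbT.
  by apply: contraTneq (fB y cy) => <-; rewrite (disjointFr dAB (fA x cx)).
exists f; split.
  move=> x y; case cx: (c x); case cy: (c y) => fxy.
  - rewrite /f cx cy in fxy.
    by apply: (nth_index_inj (enum_uniq A) sCA _ _ fxy); rewrite mem_enum inE ?cx ?cy.
  - by move: (fAB x y); rewrite cx cy fxy eqxx => /(_ isT isT).
  - by move: (fAB y x); rewrite cx cy fxy eqxx => /(_ isT isT).
  - rewrite /f cx cy in fxy.
    by apply: (nth_index_inj (enum_uniq B) sDB _ _ fxy); rewrite mem_enum inE ?cx ?cy.
move=> x y /proper; rewrite /compl_graph; case cx: (c x); case cy: (c y) => // _.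
  by apply: fAB; rewrite ?cy.
by rewrite eq_sym Fsym; apply: fAB; rewrite ?cx.
Qed.

Lemma ramsey_arrow_path_bipartite (T : finType) (H : rel T) (c : T -> bool) k n :
  (forall x y, H x y -> c x != c y) ->
  #|[set x | c x]| <= k -> #|[set x | ~~ c x]| <= k.+1 -> 2 * k * k + k + 2 <= n ->
  ramsey_arrow (path_graph n) H (n + k - 1).
Proof.
move=> proper cC cD big F [Fsym Firr].
have u0 : 'I_(n + k - 1) by exists 0; lia.
have [[A [B [dAB cA cB antiAB]]] | noAB] := classic (exists A B : {set 'I_(n + k - 1)},
  [/\ [disjoint A & B], k <= #|A|, k < #|B| & anticomplete F A B]).
  right; apply: (contains_subgraph_compl u0 Fsym proper) antiAB => //.
    exact: leq_trans cA.
  exact: leq_trans cB.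
left; have [p pp ep] : has_path_of_size F n.
  apply: (has_long_path Fsym Firr (k := k)); rewrite ?card_ord; try lia.
  by move=> A B dAB cA cB antiAB; apply: noAB; exists A, B.
by have := contains_path_graph u0 Fsym pp; rewrite ep.
Qed.

Lemma path_embedding_parity (U : finType) (H : rel U) (side : U -> bool) b n (f : 'I_n -> U) :
  (forall x y, H x y -> side y = side x (+) b) ->
  (forall i j, path_graph n i j -> H (f i) (f j)) ->
  forall i j : 'I_n, side (f i) (+) (b && odd i) = side (f j) (+) (b && odd j).
Proof.
case: n f => [|n] f Hside fH i j; first by case: i.
suff parity t (ht : t < n.+1) : side (f (Ordinal ht)) (+) (b && odd t) = side (f ord0).
  have ord_eta (l : 'I_n.+1) : l = Ordinal (ltn_ord l) by exact: val_inj.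
  by rewrite (ord_eta i) (ord_eta j) !parity.
elim: t ht => [|t IH] ht; first by rewrite /= andbF addbF; congr (side (f _)); exact: val_inj.
have edge : path_graph n.+1 (Ordinal (ltnW ht)) (Ordinal ht) by rewrite /path_graph /= eqxx.
rewrite (Hside _ _ (fH _ _ edge)) -(IH (ltnW ht)) /=.
by rewrite -addbA; congr addb; case: (odd t); rewrite ?andbT ?andbF ?addbb ?addbF.
Qed.

Definition two_cliques (M c : nat) : rel 'I_M := fun x y => (x != y) && ((x < c) == (y < c)).
Arguments two_cliques M c : clear implicits.

Lemma two_cliques_simple M c : simple_graph (two_cliques M c).
Proof. by split=> [x y | x]; rewrite /two_cliques ?eqxx // eq_sym [(y < c) == _]eq_sym. Qed.

Lemma card_two_cliques_side M c b :
  #|[set x : 'I_M | (x < c) == b]| <= (if b then c else M - c).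
Proof.
apply: (@card_le_of_inj_nat _ _ (fun x : 'I_M => if b then val x else x - c)).
  by move=> x y; rewrite !inE; case: b => /eqP xc /eqP yc /= e; apply: val_inj => /=; lia.
by move=> x; rewrite inE; case: b => /eqP xc /=; have := ltn_ord x; lia.
Qed.

Lemma path_in_two_cliques M c n :
  0 < n -> contains_subgraph (path_graph n) (two_cliques M c) -> n <= c \/ n <= M - c.
Proof.
move=> n0 [f [finj fP]]; set b := f (Ordinal n0) < c.
have side i : f i \in [set x : 'I_M | (x < c) == b].
  rewrite inE; have := path_embedding_parity (side := fun x : 'I_M => x < c) (b := false) _ fP.
  move=> /(_ _ i (Ordinal n0)).
  by rewrite !addbF => ->; last by move=> x y /andP[_ /eqP ->]; rewrite addbF.
have := leq_trans (card_le_of_inj finj side) (card_two_cliques_side M c b).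
by rewrite card_ord; case: b {side}; [left | right].
Qed.

Lemma even_path_in_compl_two_cliques M c k :
  contains_subgraph (path_graph (2 * k)) (compl_graph (two_cliques M c)) -> k <= M - c.
Proof.
case: k => [|k] [f [finj fP]] //.
have flip x y : compl_graph (two_cliques M c) x y -> (y < c) = (x < c) (+) true.
  by rewrite /compl_graph /two_cliques => /andP[-> /=]; case: (x < c); case: (y < c).
have parity := path_embedding_parity (side := fun x : 'I_M => x < c) flip fP.
have z0 : 0 < 2 * k.+1 by [].
set r := f (Ordinal z0) < c.
have gP (t : 'I_k.+1) : 2 * t + r < 2 * k.+1 by have := ltn_ord t; case: (r); lia.
pose g t := Ordinal (gP t).
have ginj : injective g by move=> t1 t2 /(congr1 val) /= e; apply: val_inj => /=; lia.
have fg t : f (g t) \in [set x : 'I_M | (x < c) == false].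
  rewrite inE; have := parity (g t) (Ordinal z0); rewrite /= addbF oddD oddM -/r.
  by case: (r); case: (_ < c).
have := leq_trans (card_le_of_inj (inj_comp finj ginj) fg) (card_two_cliques_side M c false).
by rewrite card_ord.
Qed.

Lemma not_ramsey_arrow_path (T : finType) (H : rel T) n k M :
  contains_subgraph (path_graph (2 * k)) H -> 0 < k <= n -> M < n + k - 1 ->
  ~ ramsey_arrow (path_graph n) H M.
Proof.
move=> PH /andP[k0 kn] ltM arrow.
have [Pn | HF] := arrow _ (two_cliques_simple M n.-1).
  by case: (path_in_two_cliques (leq_trans k0 kn) Pn); lia.
by have := even_path_in_compl_two_cliques (contains_subgraph_trans PH HF); lia.
Qed.

Lemma odd_succ_mod N i : ~~ odd N -> i < N -> odd (i.+1 %% N) = ~~ odd i.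
Proof.
move=> eN; rewrite leq_eqVlt => /orP[/eqP ei | lt]; last by rewrite modn_small.
by move: eN; rewrite -ei modnn /=; case: (odd i).
Qed.

Definition jahangir_color (s m : nat) (i : 'I_(s * m).+1) : bool := (i < s * m) && ~~ odd i.
Arguments jahangir_color s m i : clear implicits.

Lemma jahangir_color_proper s m : ~~ odd s ->
  forall i j, jahangir_graph s m i j -> jahangir_color s m i != jahangir_color s m j.
Proof.
move=> es i j; have ev : ~~ odd (s * m) by rewrite oddM (negbTE es).
have even_mul t : s %| t -> ~~ odd t by case/dvdnP=> u ->; rewrite oddM (negbTE es) andbF.
rewrite /jahangir_color.
case/or3P=> [/andP[/andP[iN jN] /orP[] /eqP e] | /andP[/andP[/eqP iN jN] /even_mul dj]
            | /andP[/andP[/eqP jN iN] /even_mul di]].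
- by rewrite iN jN e odd_succ_mod // negbK; case: (odd i).
- by rewrite iN jN e odd_succ_mod // negbK; case: (odd j).
- by rewrite iN ltnn jN dj.
- by rewrite jN ltnn iN di.
Qed.

Lemma card_jahangir_color s m k : s * m = 2 * k ->
  #|[set i | jahangir_color s m i]| <= k /\ #|[set i | ~~ jahangir_color s m i]| <= k.+1.
Proof.
rewrite /jahangir_color => smk; split.
  apply: (@card_le_of_inj_nat _ _ (fun i : 'I_(s * m).+1 => i./2)) => [i j | i]; rewrite !inE.
    by move=> /andP[iN ei] /andP[jN ej] eij; apply: ord_inj; lia.
  by move=> /andP[iN ei]; lia.
apply: (@card_le_of_inj_nat _ _ (fun i : 'I_(s * m).+1 => if i < s * m then i./2 else k)).
  move=> i j ci cj eij; apply: ord_inj; move: ci cj eij; rewrite !inE.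
  have := ltn_ord i; have := ltn_ord j.
  by case: (ltnP i (s * m)) => ?; case: (ltnP j (s * m)) => ? /=; lia.
move=> i; rewrite inE; have := ltn_ord i.
by case: (ltnP i (s * m)) => ? /=; lia.
Qed.

Lemma path_graph_sub_jahangir s m : contains_subgraph (path_graph (s * m)) (jahangir_graph s m).
Proof.
exists (widen_ord (leqnSn _)); split=> [i j /(congr1 val) /= e | i j]; first exact: val_inj.
have := ltn_ord i; have := ltn_ord j.
rewrite /path_graph /jahangir_graph /= => jN iN /orP[] /eqP e.
  by rewrite iN jN e modn_small // eqxx.
by rewrite iN jN e (modn_small iN) eqxx orbT.
Qed.

Theorem theorem1 (s m n : nat) :
  2 <= s -> ~~ odd s -> 3 <= m ->
  (2 * (s * m) - 1) * ((s * m) %/ 2 - 1) + 1 <= n ->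
  is_ramsey_number (path_graph n) (jahangir_graph s m) (n + (s * m) %/ 2 - 1).
Proof.
move=> s2 es m3 hn; set k := (s * m) %/ 2 in hn *.
have ev : ~~ odd (s * m) by rewrite oddM (negbTE es).
have smk : s * m = 2 * k by rewrite /k; lia.
have k3 : 3 <= k by have := leq_mul s2 m3; lia.
have big : 2 * k * k + k + 2 <= n by rewrite smk in hn; nia.
have [cC cD] := card_jahangir_color smk.
split; first exact: ramsey_arrow_path_bipartite (@jahangir_color_proper s m es) cC cD big.
move=> M ltM; apply: not_ramsey_arrow_path ltM; last by apply/andP; split; nia.
by rewrite -smk; exact: path_graph_sub_jahangir.
Qed.
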